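(* For every integer $\kappa\geq 1$ and every $z\ge1$, \[ F_{\kappa+1}(z) \geq \frac{P(\kappa)}{P(\kappa+1)}\prod_{p\leq \kappa+1}\left(1-\frac{1}{p}\right)\sum_{\substack{\ell\leq z\\(\ell,P(\kappa+1))=1}}\mu^2(\ell)\frac{\tau_\kappa(\ell)}{\psi_{\kappa+1}(\ell)\,\ell}\int_1^{z/\ell}\frac{F_\kappa(t)}{t}\,dt.\]
   Context: For $y>0$ let $P(y)=\prod_{p\le y}p$. For an integer $k\ge1$ and $y>0$, $F_k(y)=\sum_{q\leq y,\ (q,P(k))=1}\mu^2(q)\prod_{p\mid q}\frac{k}{p-k}$. $\tau_n(m)$ is the number of ordered $n$-tuples $(d_1,\dots,d_n)$ of positive integers with $d_1\cdots d_n=m$, and $\psi_n(m)=\prod_{p\mid m,\ p>n}(p-n)$. *)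

From Stdlib Require Import Reals.
From Coquelicot Require Import Coquelicot.
From mathcomp Require Import ssreflect ssrfun ssrbool eqtype ssrnat seq div
  fintype tuple bigop prime finset.
Set Implicit Arguments.
Unset Strict Implicit.
Unset Printing Implicit Defensive.

Definition nat_le_R (n : nat) (y : R) : bool :=
  if Rle_dec (INR n) y then true else false.

(* the positive integers q with q <= y (y real); iota 1 N with N >= y covers them *)
Definition nats_upto (y : R) : seq nat :=
  [seq q <- iota 1 (Z.to_nat (up y)) | nat_le_R q y].

Definition Pprod (k : nat) : nat := (\prod_(p < k.+1 | prime p) p)%N.

Definition squarefree (q : nat) : bool :=
  (0 < q)%N && all (fun p => logn p q == 1%N) (primes q).
Definition mu2 (q : nat) : R := if squarefree q then 1%R else 0%R.

Definition Rsum_seq {T} (s : seq T) (f : T -> R) : R := foldr (fun x acc => f x + acc)%R 0%R s.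
Definition Rprod_seq {T} (s : seq T) (f : T -> R) : R := foldr (fun x acc => f x * acc)%R 1%R s.

Definition Fk (k : nat) (y : R) : R :=
  Rsum_seq [seq q <- nats_upto y | coprime q (Pprod k)]
    (fun q => mu2 q * Rprod_seq (primes q) (fun p => INR k / (INR p - INR k)))%R.

(* tau_n(m) = number of ordered n-tuples (d_1,...,d_n) of positive integers with
   d_1 ... d_n = m.  For m >= 1 every such d_i lies in {1,...,m}, so we count
   n-tuples over 'I_(m+1) with product m (a zero entry would give product 0 <> m). *)
Definition tau (n m : nat) : nat :=
  #|[set t : n.-tuple 'I_m.+1 | (\prod_(i <- t) (i : nat))%N == m]|.

Definition psi (n m : nat) : nat := (\prod_(p <- primes m | (n < p)%N) (p - n))%N.

(* After integrating F_k term by term, both sides are sums over squarefree n of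
   multiplicative weights tested against nondecreasing functions of z/n that vanish
   below 1.  Restrict every such sum to integers whose prime factors lie below j and
   adjoin the primes one at a time: a weight w that is multiplicative on these integers
   turns the sum S_j into S_{j+1}(Y) <= S_j(Y) + (L_p - 1) S_j(Y/p), where L_p is the
   local factor of w at p.  Since ln u <= sum_{n <= u} 1/n and tau_k(l) <= k^omega(l), the
   right-hand side is at most the constant times a triple convolution whose local factor
   at p > k+1 is
     (1 + 1/(p-1)) (1 + k/(p-k)) (1 + k/((p-k-1)p)) = 1 + (k+1)/(p-k-1),
   which is exactly the local factor of F_{k+1}; at the primes p <= k+1, which F_{k+1}
   does not see, the local factor is cancelled by P(k)/P(k+1) prod_{p <= k+1} (1 - 1/p). *)

From Stdlib Require Import Reals Lra ZArith.
From Coquelicot Require Import Coquelicot.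
From HB Require Import structures.
From mathcomp Require Import ssreflect ssrfun ssrbool eqtype ssrnat seq div
  fintype tuple finfun bigop prime finset.
From mathcomp Require Import zify.

Set Implicit Arguments.
Unset Strict Implicit.

Open Scope R_scope.

HB.instance Definition _ := Monoid.isComLaw.Build R 0 Rplus
  (fun x y z => esym (Rplus_assoc x y z)) Rplus_comm Rplus_0_l.
HB.instance Definition _ := Monoid.isComLaw.Build R 1 Rmult
  (fun x y z => esym (Rmult_assoc x y z)) Rmult_comm Rmult_1_l.
HB.instance Definition _ := Monoid.isMulLaw.Build R 0 Rmult Rmult_0_l Rmult_0_r.
HB.instance Definition _ :=
  Monoid.isAddLaw.Build R Rmult Rplus Rmult_plus_distr_r Rmult_plus_distr_l.

Lemma Rsum_seqE T (s : seq T) f : Rsum_seq s f = \big[Rplus/0]_(x <- s) f x.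
Proof. by elim: s => [|a s IH]; rewrite ?big_nil // big_cons -IH. Qed.

Lemma Rprod_seqE T (s : seq T) f : Rprod_seq s f = \big[Rmult/1]_(x <- s) f x.
Proof. by elim: s => [|a s IH]; rewrite ?big_nil // big_cons -IH. Qed.

Lemma ler_Rsum (T : eqType) (s : seq T) (P : pred T) (f g : T -> R) :
  (forall x, x \in s -> P x -> f x <= g x) ->
  \big[Rplus/0]_(x <- s | P x) f x <= \big[Rplus/0]_(x <- s | P x) g x.
Proof.
move=> fg; rewrite big_seq_cond [X in _ <= X]big_seq_cond.
apply: (big_ind2 Rle); [lra | move=> *; lra |].
by move=> x /andP [xs Px]; apply: fg.
Qed.

Lemma Rsum_ge0 (T : eqType) (s : seq T) (P : pred T) (f : T -> R) :
  (forall x, x \in s -> P x -> 0 <= f x) -> 0 <= \big[Rplus/0]_(x <- s | P x) f x.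
Proof.
move=> f0; rewrite big_seq_cond; apply: (big_ind (Rle 0)); [lra | move=> *; lra |].
by move=> x /andP [xs Px]; apply: f0.
Qed.

Lemma Rprod_ge0 (T : eqType) (s : seq T) (P : pred T) (f : T -> R) :
  (forall x, x \in s -> P x -> 0 <= f x) -> 0 <= \big[Rmult/1]_(x <- s | P x) f x.
Proof.
move=> f0; rewrite big_seq_cond; apply: (big_ind (Rle 0)); [lra | exact: Rmult_le_pos |].
by move=> x /andP [xs Px]; apply: f0.
Qed.

Lemma INR_prod T (s : seq T) (P : pred T) (F : T -> nat) :
  INR (\prod_(i <- s | P i) F i)%N = \big[Rmult/1]_(i <- s | P i) INR (F i).
Proof.
elim: s => [|a s IH]; first by rewrite !big_nil.
by rewrite !big_cons; case: (P a); rewrite ?mult_INR IH.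
Qed.

Lemma Rprod_const T (s : seq T) c : \big[Rmult/1]_(i <- s) c = c ^ size s.
Proof. by elim: s => [|a s IH]; rewrite ?big_nil // big_cons IH. Qed.

Lemma INR_expn m n : INR (m ^ n)%N = INR m ^ n.
Proof. by elim: n => [|n IH]; rewrite ?expn0 // expnS mult_INR IH. Qed.

Lemma INR_ge1 n : (0 < n)%N -> 1 <= INR n.
Proof. by move=> n0; apply: (le_INR 1); apply/leP. Qed.

Lemma INR_prime_gt1 p : prime p -> 1 < INR p.
Proof. by move=> pp; apply: (lt_INR 1); apply/ltP; apply: prime_gt1. Qed.

Lemma INR_subn_gt0 a b : (a < b)%N -> 0 < INR b - INR a.
Proof.
move=> ab; suff : INR a < INR b by lra.
by apply: lt_INR; apply/ltP.
Qed.

Lemma Rdiv_ge1 Y d : 0 < d -> d <= Y -> 1 <= Y / d.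
Proof.
move=> d0 dY; apply: (Rmult_le_reg_r d) => //.
by rewrite /Rdiv Rmult_assoc Rinv_l; lra.
Qed.

Lemma Rdiv_lt1 Y d : 0 < d -> Y < d -> Y / d < 1.
Proof.
move=> d0 Yd; apply: (Rmult_lt_reg_r d) => //.
by rewrite /Rdiv Rmult_assoc Rinv_l; lra.
Qed.

Lemma Rdiv_le_self Y d : 1 <= d -> 0 <= Y -> Y / d <= Y.
Proof.
move=> d1 Y0; apply: (Rmult_le_reg_r d); first lra.
rewrite /Rdiv Rmult_assoc Rinv_l; nra.
Qed.

Lemma Rdiv_le_bound Y d B : 1 <= d -> 0 <= B -> Y <= B -> Y / d <= B.
Proof.
move=> d1 B0 YB; case: (Rle_lt_dec Y 0) => Y0.
  suff : Y / d <= 0 by lra.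
  by apply: Rmult_le_0_r => //; left; apply: Rinv_0_lt_compat; lra.
by have := Rdiv_le_self d1 (Rlt_le _ _ Y0); lra.
Qed.

Lemma prime_dvd_Pprod p k : prime p -> (p <= k)%N -> (p %| Pprod k)%N.
Proof.
move=> pp pk; have pk1 : (p < k.+1)%N by [].
by rewrite /Pprod (bigD1 (Ordinal pk1)) //= dvdn_mulr.
Qed.

Lemma coprime_Pprod p k : prime p -> coprime p (Pprod k) = (k < p)%N.
Proof.
move=> pp; case: (ltnP k p) => kp; last first.
  by apply/negP; rewrite prime_coprime // => /negP; apply; apply: prime_dvd_Pprod.
rewrite /Pprod; apply: (big_ind (coprime p)) => [|x y|]; first exact: coprimen1.
  by rewrite coprimeMr => -> ->.
move=> i pi; rewrite prime_coprime //; apply/negP => /(dvdn_leq (prime_gt0 pi)).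
by have := ltn_ord i; lia.
Qed.

Lemma coprime_Pprod_primes n k p : coprime n (Pprod k) -> p \in primes n -> (k < p)%N.
Proof.
move=> co; rewrite mem_primes => /and3P [pp n0 pn].
by rewrite -coprime_Pprod // (coprime_dvdl pn co).
Qed.

Lemma Pprod_gt0 k : (0 < Pprod k)%N.
Proof.
rewrite /Pprod; apply: (big_ind (fun a => 0 < a)%N) => // [a b a0 b0|i /prime_gt0 //].
by rewrite muln_gt0 a0.
Qed.

Lemma PprodS k : Pprod k.+1 = (Pprod k * (if prime k.+1 then k.+1 else 1))%N.
Proof.
rewrite /Pprod big_mkcond big_ord_recr /= -big_mkcond /=.
by case: (prime k.+1); rewrite ?muln1.
Qed.

Lemma primes_pexpM p e m : prime p -> (0 < e)%N -> (0 < m)%N -> ~~ (p %| m)%N ->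
  perm_eq (primes (p ^ e * m)) (p :: primes m).
Proof.
move=> pp e0 m0 pm; apply: uniq_perm; first exact: primes_uniq.
  by rewrite /= primes_uniq andbT mem_primes pp m0 /=; exact: pm.
move=> q; rewrite primesM ?m0 ?expn_gt0 ?prime_gt0 //.
by rewrite primesX // primes_prime // !inE.
Qed.

Lemma logn_pexpM q p e m : prime p -> (0 < m)%N -> ~~ (p %| m)%N ->
  logn q (p ^ e * m) = ((if q == p then e else 0) + logn q m)%N.
Proof.
move=> pp m0 pm; rewrite lognM ?m0 ?expn_gt0 ?prime_gt0 //.
by rewrite lognX logn_prime //; case: (q == p); rewrite ?muln1 ?muln0.
Qed.

Lemma squarefree_gt0 l : squarefree l -> (0 < l)%N.
Proof. by case/andP. Qed.

Lemma squarefree_logn l p : squarefree l -> p \in primes l -> logn p l = 1%N.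
Proof. by case/andP => _ /allP sq /sq /eqP. Qed.

Lemma squarefree_prod_primes l : squarefree l -> l = (\prod_(p <- primes l) p)%N.
Proof.
move=> sq; rewrite {1}(prod_prime_decomp (squarefree_gt0 sq)) prime_decompE big_map.
by apply: eq_big_seq => p pl /=; rewrite (squarefree_logn sq pl) expn1.
Qed.

(** * Multiplicative weights supported on squarefree integers *)

Definition sqf_weight (k : nat) (c : nat -> R) (n : nat) : R :=
  if coprime n (Pprod k) && squarefree n then \big[Rmult/1]_(p <- primes n) c p else 0.

Definition sqf_local (k : nat) (c : nat -> R) (p e : nat) : R :=
  if e == 0%N then 1 else if (e == 1%N) && (k < p)%N then c p else 0.

Section SqfWeight.
Variables (k : nat) (c : nat -> R).

Lemma sqf_weight_pexpM p e m : prime p -> (0 < m)%N -> ~~ (p %| m)%N ->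
  sqf_weight k c (p ^ e * m) = sqf_local k c p e * sqf_weight k c m.
Proof.
move=> pp m0 pm; rewrite /sqf_local /sqf_weight.
case: e => [|e]; first by rewrite expn0 mul1n /=; ring.
have pe := primes_pexpM pp (ltn0Sn e) m0 pm.
have sq : squarefree (p ^ e.+1 * m) = (e == 0%N) && squarefree m.
  rewrite /squarefree muln_gt0 expn_gt0 prime_gt0 // m0 /= (eq_all_r (perm_mem pe)) /=.
  rewrite logn_pexpM // eqxx logn_coprime ?prime_coprime // addn0 eqSS.
  case: (e == 0%N) => //=; apply: eq_in_all => q qm.
  rewrite logn_pexpM //; case: (eqVneq q p) => [qp|//].
  by move: qm; rewrite qp mem_primes pp m0 /= (negbTE pm).
rewrite sq coprimeMl coprime_pexpl // coprime_Pprod //.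
case: e pe sq => [|e] pe sq /=; last by rewrite andbF; ring.
case: (ltnP k p) => kp /=; last by ring.
case: (_ && _); last by ring.
by rewrite (perm_big _ pe) big_cons.
Qed.

Hypothesis c_ge0 : forall p, prime p -> (k < p)%N -> 0 <= c p.

Lemma sqf_weight_ge0 n : 0 <= sqf_weight k c n.
Proof.
rewrite /sqf_weight; case: ifP => [/andP [co _]|_]; last lra.
apply: Rprod_ge0 => p pn _; apply: c_ge0; first by move: pn; rewrite mem_primes => /andP [].
exact: coprime_Pprod_primes pn.
Qed.

Lemma sqf_local_ge0 p e : prime p -> 0 <= sqf_local k c p e.
Proof.
move=> pp; rewrite /sqf_local; case: ifP => _; first lra.
by case: ifP => [/andP [_ kp]|_]; [apply: c_ge0 | lra].
Qed.

End SqfWeight.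

Lemma sqf_local_sum N k c p : (0 < N)%N ->
  \big[Rplus/0]_(e <- iota 1 N) sqf_local k c p e = if (k < p)%N then c p else 0.
Proof.
case: N => // N _; rewrite /= big_cons big_seq big1 ?Rplus_0_r // => e.
by rewrite mem_iota /sqf_local => /andP [e2 _]; case: e e2 => [|[|e]].
Qed.

Lemma sqf_weight1 k c : sqf_weight k c 1 = 1.
Proof. by rewrite /sqf_weight coprime1n /= big_nil. Qed.

(** * Sums over smooth integers *)

Definition smooth (j x : nat) : bool := all (fun p => (p < j)%N) (primes x).

Lemma smooth_nonprime j x : ~~ prime j -> smooth j.+1 x = smooth j x.
Proof.
move=> nj; apply: eq_in_all => q; rewrite mem_primes => /andP [pq _].
by rewrite ltnS leq_eqVlt; case: eqP => // qj; move: nj; rewrite -qj pq.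
Qed.

Lemma smooth_ndvd p x : prime p -> (0 < x)%N -> smooth p x -> ~~ (p %| x)%N.
Proof.
move=> pp x0 /allP smx; apply/negP => px.
by have := smx p; rewrite mem_primes pp x0 px ltnn => /(_ isT).
Qed.

Definition admissible (G : R -> R) : Prop :=
  [/\ forall Y, 0 <= G Y, forall Y1 Y2, Y1 <= Y2 -> G Y1 <= G Y2
    & forall Y, Y < 1 -> G Y = 0].

(* For admissible [G], the term [G (Y / x)] vanishes when [x > Y], so truncating at
   [N >= Y] loses nothing. *)
Definition smooth_sum (N : nat) (w : nat -> R) (G : R -> R) (j : nat) (Y : R) : R :=
  \big[Rplus/0]_(x <- iota 1 N | smooth j x) (w x * G (Y / INR x)).

Lemma admissible_div_le G d Y : admissible G -> 1 <= d -> G (Y / d) <= G Y.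
Proof.
case=> G0 Gle Glt1 d1; case: (Rlt_le_dec Y 1) => Y1.
  by rewrite Glt1; [apply: G0 | apply: Rdiv_lt1; lra].
by apply: Gle; apply: Rdiv_le_self; lra.
Qed.

Lemma admissible_div G d : admissible G -> 1 <= d -> admissible (fun Y => G (Y / d)).
Proof.
case=> G0 Gle Glt1 d1; split=> // [Y1 Y2 le|Y Y1].
  by apply: Gle; apply: Rmult_le_compat_r => //; left; apply: Rinv_0_lt_compat; lra.
by apply: Glt1; apply: Rdiv_lt1; lra.
Qed.

Lemma mem_iota1 x N : x \in iota 1 N -> (0 < x)%N.
Proof. by rewrite mem_iota => /andP []. Qed.

Lemma smooth_sum_admissible N w G j :
  (forall x, 0 <= w x) -> admissible G -> admissible (smooth_sum N w G j).
Proof.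
move=> w0 [G0 Gle Glt1]; split.
- by move=> Y; apply: Rsum_ge0 => x _ _; apply: Rmult_le_pos.
- move=> Y1 Y2 le; apply: ler_Rsum => x /mem_iota1 /INR_ge1 x1 _.
  apply: Rmult_le_compat_l => //; apply: Gle.
  by apply: Rmult_le_compat_r => //; left; apply: Rinv_0_lt_compat; lra.
- move=> Y Y1; rewrite /smooth_sum big_seq_cond big1 // => x /andP [/mem_iota1 /INR_ge1 x1 _].
  by rewrite Glt1 ?Rmult_0_r //; apply: Rdiv_lt1; lra.
Qed.

Lemma smooth_sum_ext N w G1 G2 j Y :
  (forall Y, G1 Y = G2 Y) -> smooth_sum N w G1 j Y = smooth_sum N w G2 j Y.
Proof. by move=> G12; apply: eq_bigr => x _; rewrite G12. Qed.

Lemma smooth_sum_nonprime N w G j Y :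
  ~~ prime j -> smooth_sum N w G j.+1 Y = smooth_sum N w G j Y.
Proof. by move=> nj; apply: eq_bigl => x; apply: smooth_nonprime. Qed.

Lemma smooth_sum0 N w G Y : (0 < N)%N -> smooth_sum N w G 0 Y = w 1%N * G Y.
Proof.
case: N => // N _; rewrite /smooth_sum /= big_cons /= Rdiv_1_r.
rewrite big_seq_cond big1 ?Rplus_0_r // => x /andP [].
rewrite mem_iota /smooth => /andP [x2 _].
have : primes x != [::] by rewrite primes_eq0 -leqNgt.
by case: (primes x).
Qed.

Lemma smooth_sum_full N w G Y :
  smooth_sum N w G N.+1 Y = \big[Rplus/0]_(x <- iota 1 N) (w x * G (Y / INR x)).
Proof.
rewrite /smooth_sum big_seq_cond [RHS]big_seq; apply: eq_bigl => x.
case xN: (x \in iota 1 N) => //=; move: xN; rewrite mem_iota => /andP [x1 xN].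
apply/allP => p; rewrite mem_primes => /and3P [_ _ px].
by have := dvdn_leq x1 px; lia.
Qed.

Lemma pexpn_gt0 p e : prime p -> (0 < p ^ e)%N.
Proof. by move=> pp; rewrite expn_gt0 prime_gt0. Qed.

Section PrimeStep.
Variables (N p : nat).
Hypothesis pp : prime p.

Let pe_gt0 e : (0 < p ^ e)%N := pexpn_gt0 e pp.

Lemma smooth_pexp_fiber e :
  perm_eq [seq y <- iota 1 N | smooth p.+1 y && (e == logn p y)]
          [seq (p ^ e * x)%N | x <- [seq x <- iota 1 N | smooth p x && (p ^ e * x <= N)%N]].
Proof.
apply: uniq_perm; first by rewrite filter_uniq ?iota_uniq.
  rewrite map_inj_uniq ?filter_uniq ?iota_uniq // => a b /eqP.
  by rewrite eqn_pmul2l // => /eqP.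
move=> y; rewrite mem_filter mem_iota; apply/idP/idP.
- move=> /and3P [/andP [smy /eqP ey] y1 yN].
  have y0 : (0 < y)%N by lia.
  have pey : (p ^ e %| y)%N by rewrite ey pfactor_dvdnn.
  have ydef : y = (p ^ e * (y %/ p ^ e))%N by rewrite mulnC divnK.
  have x0 : (0 < y %/ p ^ e)%N by move: y0; rewrite {1}ydef muln_gt0 => /andP [].
  have lx : logn p (y %/ p ^ e) = 0%N.
    by move: ey; rewrite {1}ydef lognM // pfactorK //; lia.
  apply/mapP; exists (y %/ p ^ e)%N => //.
  rewrite mem_filter mem_iota -ydef x0 /=.
  have -> : (y <= N)%N by lia.
  have -> : (y %/ p ^ e < 1 + N)%N by have := leq_div y (p ^ e); lia.
  rewrite !andbT; apply/allP => q qx.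
  have qy : q \in primes y.
    move: qx; rewrite !mem_primes => /and3P [-> _ qd]; rewrite y0 /=.
    exact: dvdn_trans qd (dvdn_div pey).
  move/allP: smy => /(_ q qy); rewrite ltnS leq_eqVlt => /orP [/eqP qp|//].
  by move: qx; rewrite -logn_gt0 qp lx.
- case/mapP => x; rewrite mem_filter mem_iota => /and3P [/andP [smx xN'] x1 xN] ->.
  have x0 : (0 < x)%N by lia.
  have px := smooth_ndvd pp x0 smx.
  have -> : (p ^ e * x < 1 + N)%N by lia.
  rewrite muln_gt0 pe_gt0 x0 logn_pexpM // eqxx logn_coprime ?addn0 ?prime_coprime //.
  rewrite eqxx !andbT.
  apply/allP => q; rewrite primesM // => /orP [|qx].
    case: e {xN'} => [|e]; first by rewrite expn0.
    by rewrite primesX // primes_prime // mem_seq1 => /eqP ->.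
  by move/allP: smx => /(_ q qx) /ltnW.
Qed.

Lemma smooth_sum_split (F : nat -> R) :
  \big[Rplus/0]_(y <- iota 1 N | smooth p.+1 y) F y =
  \big[Rplus/0]_(e <- iota 0 N.+1) \big[Rplus/0]_(x <- iota 1 N | smooth p x)
      (if (p ^ e * x <= N)%N then F (p ^ e * x)%N else 0).
Proof.
transitivity (\big[Rplus/0]_(y <- iota 1 N | smooth p.+1 y)
   \big[Rplus/0]_(e <- iota 0 N.+1) (if e == logn p y then F y else 0)).
  rewrite big_seq_cond [RHS]big_seq_cond; apply: eq_bigr => y.
  rewrite mem_iota => /andP [/andP [y1 yN] _].
  have ly : logn p y \in iota 0 N.+1 by rewrite mem_iota; have := ltn_logl p y1; lia.
  rewrite (bigD1_seq _ ly (iota_uniq _ _)) eqxx big1 => [/=|e /negbTE -> //]; ring.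
rewrite exchange_big; apply: eq_bigr => e _.
rewrite -big_mkcondr -big_filter -[in RHS]big_mkcondr -[in RHS]big_filter.
rewrite -(big_map (fun x => p ^ e * x)%N xpredT F).
by apply: perm_big; apply: smooth_pexp_fiber.
Qed.

Variables (w wl : nat -> R) (G : R -> R).
Hypothesis w_pexpM : forall e x, (0 < x)%N -> smooth p x -> w (p ^ e * x)%N = wl e * w x.

Let smooth_sum_term e x Y : x \in iota 1 N -> smooth p x -> (p ^ e * x <= N)%N ->
  w (p ^ e * x)%N * G (Y / INR (p ^ e * x)) = wl e * (w x * G (Y / INR (p ^ e) / INR x)).
Proof.
move=> /mem_iota1 x0 smx _; rewrite w_pexpM // mult_INR.
have := lt_0_INR _ (ltP x0); have := lt_0_INR _ (ltP (pe_gt0 e)) => ? ?.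
have -> : Y / (INR (p ^ e) * INR x) = Y / INR (p ^ e) / INR x by field; lra.
ring.
Qed.

Lemma smooth_sum_pexp_le Y : (forall x, 0 <= w x) -> (forall e, 0 <= wl e) ->
  (forall Y, 0 <= G Y) ->
  smooth_sum N w G p.+1 Y <=
  \big[Rplus/0]_(e <- iota 0 N.+1) (wl e * smooth_sum N w G p (Y / INR (p ^ e))).
Proof.
move=> w0 wl0 G0; rewrite /smooth_sum smooth_sum_split; apply: ler_Rsum => e _ _.
rewrite big_distrr /=; apply: ler_Rsum => x xs smx.
case: ifP => xN; first by rewrite smooth_sum_term //; lra.
by apply: Rmult_le_pos => //; apply: Rmult_le_pos.
Qed.

Lemma smooth_sum_pexp Y : admissible G -> Y <= INR N ->
  smooth_sum N w G p.+1 Y =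
  \big[Rplus/0]_(e <- iota 0 N.+1) (wl e * smooth_sum N w G p (Y / INR (p ^ e))).
Proof.
move=> [_ _ Glt1] YN; rewrite /smooth_sum smooth_sum_split; apply: eq_bigr => e _.
rewrite big_distrr /= big_seq_cond [RHS]big_seq_cond; apply: eq_bigr => x /andP [xs smx].
case: ifP => xN; first exact: smooth_sum_term.
have x1 := INR_ge1 (mem_iota1 xs); have pe1 := INR_ge1 (pe_gt0 e).
have NpeX : INR N < INR (p ^ e) * INR x.
  by rewrite -mult_INR; apply: lt_INR; apply/ltP; rewrite ltnNge xN.
rewrite Glt1 ?Rmult_0_r //; rewrite /Rdiv Rmult_assoc -Rinv_mult.
by apply: Rdiv_lt1; nra.
Qed.

End PrimeStep.

Section Growth.
Variables (N p : nat) (w wl : nat -> R).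
Hypotheses (pp : prime p) (w_ge0 : forall x, 0 <= w x) (wl_ge0 : forall e, 0 <= wl e).
Hypotheses (wl0 : wl 0%N = 1)
  (w_pexpM : forall e x, (0 < x)%N -> smooth p x -> w (p ^ e * x)%N = wl e * w x).

Lemma local_sum_le (S : R -> R) Y : admissible S ->
  \big[Rplus/0]_(e <- iota 0 N.+1) (wl e * S (Y / INR (p ^ e))) <=
  S Y + \big[Rplus/0]_(e <- iota 1 N) wl e * S (Y / INR p).
Proof.
move=> admS; rewrite big_cons wl0 expn0 Rdiv_1_r big_distrl /=.
apply: Rplus_le_compat; first lra.
apply: ler_Rsum => e; rewrite mem_iota => /andP [e1 _] _.
apply: Rmult_le_compat_l => //.
have -> : Y / INR (p ^ e) = Y / INR p / INR (p ^ e.-1).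
  have := INR_prime_gt1 pp; have := INR_ge1 (pexpn_gt0 e.-1 pp).
  by move=> *; rewrite -{1}(prednK e1) expnS mult_INR; field; lra.
by apply: admissible_div_le => //; apply: INR_ge1; apply: pexpn_gt0.
Qed.

Lemma smooth_sum_growth (G0 G1 : R -> R) (g W : R) :
  \big[Rplus/0]_(e <- iota 1 N) wl e <= W ->
  admissible G0 -> (forall Y, 0 <= G1 Y) -> 1 <= g ->
  (forall Y, G1 Y <= G0 Y + (g - 1) * G0 (Y / INR p)) ->
  forall Y, smooth_sum N w G1 p.+1 Y <=
    smooth_sum N w G0 p Y + (g * (1 + W) - 1) * smooth_sum N w G0 p (Y / INR p).
Proof.
move=> sumW admG0 G1_ge0 g1 G1_le Y.
set H0 := smooth_sum N w G0 p.
have p1 := INR_prime_gt1 pp.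
have admH0 : admissible H0 by apply: smooth_sum_admissible.
have admH0p : admissible (fun Z => H0 (Z / INR p)) by apply: admissible_div => //; lra.
have H1_le Z : smooth_sum N w G1 p Z <= H0 Z + (g - 1) * H0 (Z / INR p).
  rewrite /H0 /smooth_sum big_distrr -big_split /=; apply: ler_Rsum => x xs _.
  have x1 := INR_ge1 (mem_iota1 xs).
  have -> : Z / INR p / INR x = Z / INR x / INR p by field; lra.
  by have := G1_le (Z / INR x); have := w_ge0 x; nra.
set W' := \big[Rplus/0]_(e <- iota 1 N) wl e.
have W'0 : 0 <= W' by apply: Rsum_ge0.
have split_e : smooth_sum N w G1 p.+1 Y <=
    \big[Rplus/0]_(e <- iota 0 N.+1) (wl e * H0 (Y / INR (p ^ e)))
    + (g - 1) * \big[Rplus/0]_(e <- iota 0 N.+1) (wl e * H0 (Y / INR (p ^ e) / INR p)).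
  apply: Rle_trans (smooth_sum_pexp_le N pp w_pexpM Y w_ge0 wl_ge0 G1_ge0) _.
  rewrite big_distrr -big_split /=; apply: ler_Rsum => e _ _.
  by have := H1_le (Y / INR (p ^ e)); have := wl_ge0 e; nra.
have B0 := local_sum_le Y admH0; have B1 := local_sum_le Y admH0p.
rewrite -/W' in B0 B1; cbv beta in B1.
have B1g := Rmult_le_compat_l (g - 1) _ _ ltac:(lra) B1.
have [H0_ge0 _ _] := admH0.
have ba := admissible_div_le (Y / INR p) admH0 (Rlt_le _ _ p1).
have : W' * H0 (Y / INR p) <= W * H0 (Y / INR p) by apply: Rmult_le_compat_r.
have : (g - 1) * (W' * H0 (Y / INR p / INR p)) <= (g - 1) * (W * H0 (Y / INR p)).
  by apply: Rmult_le_compat_l; [lra | apply: Rmult_le_compat].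
lra.
Qed.

End Growth.

Lemma smooth_sum_sqf_step N k c G p Y : (0 < N)%N -> prime p -> admissible G ->
  Y <= INR N ->
  smooth_sum N (sqf_weight k c) G p.+1 Y = smooth_sum N (sqf_weight k c) G p Y
    + (if (k < p)%N then c p else 0) * smooth_sum N (sqf_weight k c) G p (Y / INR p).
Proof.
move=> N0 pp admG YN.
rewrite (@smooth_sum_pexp N p pp _ (sqf_local k c p)) // => [|e x x0 smx]; last first.
  by rewrite sqf_weight_pexpM // smooth_ndvd.
case: N N0 {YN} => // N _; rewrite /= !big_cons big_seq big1 => [|e].
  by rewrite /sqf_local /= expn1 Rdiv_1_r; case: ifP => _; ring.
by rewrite mem_iota /sqf_local => /andP [e2 _]; case: e e2 => [|[|e]] //= _; ring.
Qed.

Lemma geom_sum_le N p : prime p ->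
  \big[Rplus/0]_(e <- iota 1 N) (/ INR p) ^ e <= / (INR p - 1).
Proof.
move=> pp; have p1 := INR_prime_gt1 pp.
have r0 : 0 < / INR p by apply: Rinv_0_lt_compat; lra.
have r1 : / INR p < 1 by rewrite -Rinv_1; apply: Rinv_lt_contravar; lra.
have -> : \big[Rplus/0]_(e <- iota 1 N) (/ INR p) ^ e
    = (/ INR p - (/ INR p) ^ N.+1) / (1 - / INR p).
  elim: N => [|N IH]; first by rewrite big_nil /=; field; lra.
  have -> : iota 1 N.+1 = iota 1 N ++ [:: N.+1] by rewrite -[N.+1]addn1 iotaD addnC.
  by rewrite big_cat big_seq1 /= IH -tech_pow_Rmult; field; lra.
have -> : / (INR p - 1) = / INR p / (1 - / INR p) by field; lra.
have := pow_le _ N.+1 (Rlt_le _ _ r0).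
by move=> ?; apply: Rmult_le_compat_r; [left; apply: Rinv_0_lt_compat|]; lra.
Qed.

Definition ind_ge1 (Y : R) : R := if Rle_dec 1 Y then 1 else 0.

Definition Fcoef (k p : nat) : R := INR k / (INR p - INR k).
Definition Acoef (k p : nat) : R := INR k / ((INR p - INR k.+1) * INR p).

Definition Fweight (k : nat) : nat -> R := sqf_weight k (Fcoef k).

(* Majorizes the coefficient [mu2 l * tau k l / (psi k.+1 l * l)], as
   [tau k l <= k ^ omega(l)]. *)
Definition Aweight (k : nat) : nat -> R := sqf_weight k.+1 (Acoef k).

(* With [j = N.+1] and arguments at most [N], these are [F_k] itself and majorants of
   [ln], of [Y |-> int_1^Y F_k(t) dt/t] and of the sum on the right of the theorem. *)
Definition F_sum (N k j : nat) : R -> R := smooth_sum N (Fweight k) ind_ge1 j.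
Definition harmonic_sum (N j : nat) : R -> R := smooth_sum N (fun n => / INR n) ind_ge1 j.
Definition logF_sum (N k j : nat) : R -> R := smooth_sum N (Fweight k) (harmonic_sum N j) j.
Definition rhs_sum (N k j : nat) : R -> R := smooth_sum N (Aweight k) (logF_sum N k j) j.

Definition harmonic_factor (p : nat) : R := 1 + / (INR p - 1).
Definition logF_factor (k p : nat) : R :=
  harmonic_factor p * (1 + if (k < p)%N then Fcoef k p else 0).
Definition rhs_factor (k p : nat) : R :=
  logF_factor k p * (1 + if (k.+1 < p)%N then Acoef k p else 0).

Lemma ind_ge1_1 Y : 1 <= Y -> ind_ge1 Y = 1.
Proof. by rewrite /ind_ge1; case: Rle_dec. Qed.

Lemma ind_ge1_0 Y : Y < 1 -> ind_ge1 Y = 0.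
Proof. by rewrite /ind_ge1; case: Rle_dec => // *; lra. Qed.

Lemma admissible_ind_ge1 : admissible ind_ge1.
Proof.
rewrite /ind_ge1; split=> [Y|Y1 Y2 le|Y Y1]; do ![case: Rle_dec => /=]; lra.
Qed.

Lemma inv_INR_ge0 n : 0 <= / INR n.
Proof.
case: n => [|n]; first by rewrite Rinv_0; lra.
by left; apply: Rinv_0_lt_compat; apply: lt_0_INR; apply/ltP.
Qed.

Lemma Fcoef_ge0 k p : (k < p)%N -> 0 <= Fcoef k p.
Proof.
move=> kp; have := INR_subn_gt0 kp; have := pos_INR k.
by move=> *; apply: Rmult_le_pos => //; left; apply: Rinv_0_lt_compat.
Qed.

Lemma Acoef_ge0 k p : prime p -> (k.+1 < p)%N -> 0 <= Acoef k p.
Proof.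
move=> pp kp; have := INR_subn_gt0 kp; have := pos_INR k.
have := INR_prime_gt1 pp => *; apply: Rmult_le_pos => //.
by left; apply: Rinv_0_lt_compat; nra.
Qed.

Lemma Fweight_ge0 k n : 0 <= Fweight k n.
Proof. by apply: sqf_weight_ge0 => p _; apply: Fcoef_ge0. Qed.

Lemma Aweight_ge0 k n : 0 <= Aweight k n.
Proof. exact: sqf_weight_ge0 (@Acoef_ge0 k) n. Qed.

Lemma admissible_harmonic_sum N j : admissible (harmonic_sum N j).
Proof. by apply: smooth_sum_admissible; [apply: inv_INR_ge0 | apply: admissible_ind_ge1]. Qed.

Lemma admissible_logF_sum N k j : admissible (logF_sum N k j).
Proof.
by apply: smooth_sum_admissible; [apply: Fweight_ge0 | apply: admissible_harmonic_sum].
Qed.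

Lemma admissible_rhs_sum N k j : admissible (rhs_sum N k j).
Proof.
by apply: smooth_sum_admissible; [apply: Aweight_ge0 | apply: admissible_logF_sum].
Qed.

Lemma harmonic_factor_ge1 p : prime p -> 1 <= harmonic_factor p.
Proof.
move=> /INR_prime_gt1 p1; rewrite /harmonic_factor.
suff : 0 < / (INR p - 1) by lra.
by apply: Rinv_0_lt_compat; lra.
Qed.

Lemma logF_factor_ge1 k p : prime p -> 1 <= logF_factor k p.
Proof.
move=> pp; have := harmonic_factor_ge1 pp; rewrite /logF_factor.
case: ifP => [kp|_] h; last lra.
by have := Fcoef_ge0 kp; nra.
Qed.

Section LocalFactors.
Variables (N k p : nat).
Hypotheses (N0 : (0 < N)%N) (pp : prime p).

Lemma harmonic_sum_step Y :
  harmonic_sum N p.+1 Y <= harmonic_sum N p Y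
    + (harmonic_factor p - 1) * harmonic_sum N p (Y / INR p).
Proof.
have p1 := INR_prime_gt1 pp.
have := @smooth_sum_growth N p _ (fun e => (/ INR p) ^ e) pp inv_INR_ge0 _ _ _
  ind_ge1 ind_ge1 1 (/ (INR p - 1)) (geom_sum_le N pp) admissible_ind_ge1.
rewrite Rmult_1_l; apply=> //.
- by move=> e; apply: pow_le; left; apply: Rinv_0_lt_compat; lra.
- by move=> e x _ _; rewrite mult_INR INR_expn Rinv_mult pow_inv.
- by case: admissible_ind_ge1.
- by lra.
- by move=> Y'; lra.
Qed.

Lemma logF_sum_step Y :
  logF_sum N k p.+1 Y <= logF_sum N k p Y + (logF_factor k p - 1) * logF_sum N k p (Y / INR p).
Proof.
apply: (smooth_sum_growth (wl := sqf_local k (Fcoef k) p)) => //.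
- exact: Fweight_ge0.
- by move=> e; apply: sqf_local_ge0 => // q _; apply: Fcoef_ge0.
- by move=> e x x0 smx; rewrite /Fweight sqf_weight_pexpM // smooth_ndvd.
- by rewrite sqf_local_sum //; right.
- exact: admissible_harmonic_sum.
- by case: (admissible_harmonic_sum N p.+1).
- exact: harmonic_factor_ge1.
- exact: harmonic_sum_step.
Qed.

Lemma rhs_sum_step Y :
  rhs_sum N k p.+1 Y <= rhs_sum N k p Y + (rhs_factor k p - 1) * rhs_sum N k p (Y / INR p).
Proof.
apply: (smooth_sum_growth (wl := sqf_local k.+1 (Acoef k) p)) => //.
- exact: Aweight_ge0.
- by move=> e; apply: sqf_local_ge0 => //; apply: Acoef_ge0.
- by move=> e x x0 smx; rewrite /Aweight sqf_weight_pexpM // smooth_ndvd.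
- by rewrite sqf_local_sum //; right.
- exact: admissible_logF_sum.
- by case: (admissible_logF_sum N k p.+1).
- exact: logF_factor_ge1.
- exact: logF_sum_step.
Qed.

Lemma F_sum_step X : X <= INR N ->
  F_sum N k.+1 p.+1 X = F_sum N k.+1 p X
    + (if (k.+1 < p)%N then Fcoef k.+1 p else 0) * F_sum N k.+1 p (X / INR p).
Proof. by move=> XN; apply: smooth_sum_sqf_step => //; apply: admissible_ind_ge1. Qed.

End LocalFactors.

Lemma rhs_sum_nonprime N k j X : ~~ prime j -> rhs_sum N k j.+1 X = rhs_sum N k j X.
Proof.
move=> nj; rewrite /rhs_sum smooth_sum_nonprime //; apply: smooth_sum_ext => Y.
rewrite /logF_sum smooth_sum_nonprime //; apply: smooth_sum_ext => Z.
by rewrite /harmonic_sum smooth_sum_nonprime.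
Qed.

Lemma F_sum_nonprime N k j X : ~~ prime j -> F_sum N k j.+1 X = F_sum N k j X.
Proof. exact: smooth_sum_nonprime. Qed.

Lemma rhs_factor_large k p : prime p -> (k.+1 < p)%N ->
  rhs_factor k p - 1 = Fcoef k.+1 p.
Proof.
move=> pp kp; rewrite /rhs_factor /logF_factor /harmonic_factor /Fcoef /Acoef kp ltnW //.
have := INR_subn_gt0 kp; have := INR_subn_gt0 (ltnW kp); have := pos_INR k.
by rewrite S_INR => *; field; lra.
Qed.

Definition small_prime_factor (k p : nat) : R :=
  (1 - / INR p) * (if p == k.+1 then / INR k.+1 else 1).

Lemma small_prime_factorK k p : prime p -> (p <= k.+1)%N ->
  small_prime_factor k p * rhs_factor k p = 1.
Proof.
move=> pp pk; have p1 := INR_prime_gt1 pp.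
rewrite /small_prime_factor /rhs_factor /logF_factor /harmonic_factor /Fcoef.
have -> : (k.+1 < p)%N = false by apply/negbTE; rewrite -leqNgt.
case: (eqVneq p k.+1) => [pk1|pk1].
  by rewrite pk1 ltnSn S_INR in p1 *; field; lra.
have -> : (k < p)%N = false by apply/negbTE; rewrite -leqNgt -ltnS ltn_neqAle pk1.
by field; lra.
Qed.

Lemma small_prime_factor_ge0 k p : prime p -> 0 <= small_prime_factor k p.
Proof.
move=> /INR_prime_gt1 p1; rewrite /small_prime_factor.
have : / INR p < 1 by rewrite -Rinv_1; apply: Rinv_lt_contravar; lra.
have : 0 < / INR k.+1 by apply: Rinv_0_lt_compat; apply: lt_0_INR; apply/ltP.
by case: ifP => _ *; nra.
Qed.

Definition sieve_const (k j : nat) : R :=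
  \big[Rmult/1]_(0 <= p < j | prime p && (p <= k.+1)%N) small_prime_factor k p.

Lemma sieve_const_ge0 k j : 0 <= sieve_const k j.
Proof. by apply: Rprod_ge0 => p _ /andP [pp _]; apply: small_prime_factor_ge0. Qed.

Lemma rhs_factor_ge1 k p : prime p -> 1 <= rhs_factor k p.
Proof.
move=> pp; have := logF_factor_ge1 k pp; rewrite /rhs_factor.
case: ifP => [kp|_] h; last lra.
by have := Acoef_ge0 pp kp; nra.
Qed.

Lemma sieve_const_rhs_sum_le N k j X : (0 < N)%N -> X <= INR N ->
  sieve_const k j * rhs_sum N k j X <= F_sum N k.+1 j X.
Proof.
move=> N0; elim: j X => [|j IH] X XN.
  rewrite /sieve_const big_geq // /rhs_sum /F_sum !smooth_sum0 // /logF_sum.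
  rewrite smooth_sum0 // /harmonic_sum smooth_sum0 // /Aweight /Fweight !sqf_weight1.
  by rewrite Rinv_1; lra.
rewrite /sieve_const big_mkcond big_nat_recr //= -big_mkcond -/(sieve_const k j).
case: (boolP (prime j)) => pj /=; last first.
  by rewrite Rmult_1_r rhs_sum_nonprime // F_sum_nonprime //; apply: IH.
have c0 := sieve_const_ge0 k j.
have rf1 := rhs_factor_ge1 k pj.
have R_step := rhs_sum_step k N0 pj X.
have [R_ge0 _ _] := admissible_rhs_sum N k j.
case: (ltnP k.+1 j) => kj.
- (* [j] enters both sides, with the same local factor. *)
  have XjN : X / INR j <= INR N.
    by apply: Rdiv_le_bound XN; [apply: Rlt_le; apply: INR_prime_gt1 | apply: pos_INR].
  rewrite Rmult_1_r (F_sum_step k N0 pj XN) kj -rhs_factor_large //.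
  have := Rmult_le_compat_l _ _ _ c0 R_step.
  have := Rmult_le_compat_l (rhs_factor k j - 1) _ _ ltac:(lra) (IH _ XjN).
  by have := IH X XN; lra.
- (* [j] enters the right side only, and [small_prime_factor k j] absorbs it. *)
  rewrite (F_sum_step k N0 pj XN) ltnNge kj /= Rmult_0_l Rplus_0_r.
  have := admissible_div_le X (admissible_rhs_sum N k j) (Rlt_le _ _ (INR_prime_gt1 pj)).
  move=> Rj_le; have : rhs_sum N k j.+1 X <= rhs_factor k j * rhs_sum N k j X.
    by have := R_ge0 (X / INR j); nra.
  move=> R1_le; apply: Rle_trans (IH X XN); rewrite Rmult_assoc.
  apply: Rmult_le_compat_l => //.
  rewrite -[X in _ <= X]Rmult_1_l -(small_prime_factorK pj kj) Rmult_assoc.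
  by apply: Rmult_le_compat_l => //; apply: small_prime_factor_ge0.
Qed.

(** * [F_k] and its logarithmic integral as smooth sums *)

Lemma ind_ge1_div q t : (0 < q)%N -> ind_ge1 (t / INR q) = if nat_le_R q t then 1 else 0.
Proof.
move=> q0; have q1 := INR_ge1 q0; rewrite /nat_le_R /ind_ge1.
case: Rle_dec => h1; case: Rle_dec => h2 //; exfalso.
  apply: h2; apply: (Rmult_le_reg_r (/ INR q)); first by apply: Rinv_0_lt_compat; lra.
  by rewrite Rinv_r; lra.
by apply: h1; apply: Rdiv_ge1 => //; lra.
Qed.

Lemma filter_iota_upto t n d : t <= INR n ->
  [seq q <- iota 1 (n + d) | nat_le_R q t] = [seq q <- iota 1 n | nat_le_R q t].
Proof.
move=> tn; rewrite iotaD filter_cat -[RHS]cats0; congr (_ ++ _).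
apply/eqP; rewrite -(negbK (_ == _)) -has_filter; apply/hasPn => q.
rewrite mem_iota /nat_le_R => /andP [nq _]; case: Rle_dec => // qt.
have : INR n.+1 <= INR q by apply: le_INR; apply/leP; rewrite -add1n.
by rewrite S_INR; lra.
Qed.

Lemma INR_up_ge t : 0 <= t -> t <= INR (Z.to_nat (up t)).
Proof.
move=> t0; have [up_t _] := archimed t.
by rewrite INR_IZR_INZ Z2Nat.id; [lra | apply: le_IZR; lra].
Qed.

Lemma nats_upto_iota t N : 0 <= t -> t <= INR N ->
  nats_upto t = [seq q <- iota 1 N | nat_le_R q t].
Proof.
move=> t0 tN; rewrite /nats_upto; set M := Z.to_nat (up t).
have tM : t <= INR M := INR_up_ge t0.
case: (leqP M N) => [MN|/ltnW NM].
  by rewrite -(subnKC MN) filter_iota_upto.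
by rewrite -(subnKC NM) filter_iota_upto.
Qed.

Lemma Rsum_nats_upto (P : pred nat) (f : nat -> R) t N : 0 <= t -> t <= INR N ->
  Rsum_seq [seq q <- nats_upto t | P q] f
  = \big[Rplus/0]_(q <- iota 1 N | P q) (f q * ind_ge1 (t / INR q)).
Proof.
move=> t0 tN; rewrite Rsum_seqE (nats_upto_iota t0 tN) big_filter big_filter_cond.
rewrite big_mkcond [RHS]big_mkcond big_seq [RHS]big_seq; apply: eq_bigr => q /mem_iota1 q0.
by rewrite ind_ge1_div //; case: nat_le_R; case: (P q) => /=; ring.
Qed.

Lemma Fk_F_sum k t N : 0 <= t -> t <= INR N -> Fk k t = F_sum N k N.+1 t.
Proof.
move=> t0 tN; rewrite /Fk (Rsum_nats_upto _ _ t0 tN) /F_sum smooth_sum_full big_mkcond.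
apply: eq_bigr => q _; rewrite /Fweight /sqf_weight /Fcoef /mu2 Rprod_seqE.
by case: coprime; case: squarefree => /=; ring.
Qed.

Definition ln_plus (u : R) : R := if Rle_dec 1 u then ln u else 0.

Lemma is_RInt_zero a b : is_RInt (fun _ => 0) a b 0.
Proof. by have := is_RInt_const a b 0; rewrite scal_zero_r. Qed.

Lemma is_RInt_sum (s : seq nat) (f : nat -> R -> R) (v : nat -> R) a b :
  (forall q, q \in s -> is_RInt (f q) a b (v q)) ->
  is_RInt (fun t => \big[Rplus/0]_(q <- s) f q t) a b (\big[Rplus/0]_(q <- s) v q).
Proof.
elim: s => [|x s IH] fv.
  apply: (is_RInt_ext (fun _ => 0)) => [t _|]; first by rewrite big_nil.
  by rewrite big_nil; apply: is_RInt_zero.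
apply: (is_RInt_ext (fun t => plus (f x t) (\big[Rplus/0]_(q <- s) f q t))).
  by move=> t _; rewrite big_cons.
rewrite big_cons; apply: is_RInt_plus; first by apply: fv; rewrite in_cons eqxx.
by apply: IH => q qs; apply: fv; rewrite in_cons qs orbT.
Qed.

Lemma is_RInt_ind_ge1_div q Y : (0 < q)%N -> 1 <= Y ->
  is_RInt (fun t => ind_ge1 (t / INR q) / t) 1 Y (ln_plus (Y / INR q)).
Proof.
move=> q0 Y1; have q1 := INR_ge1 q0.
have vanish x : Rmin 1 (INR q) < x < Rmax 1 (INR q) -> ind_ge1 (x / INR q) / x = 0.
  rewrite Rmin_left ?Rmax_right // => x_q.
  suff -> : ind_ge1 (x / INR q) = 0 by rewrite /Rdiv Rmult_0_l.
  rewrite /ind_ge1; case: Rle_dec => // h.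
  have : x / INR q < 1 by apply: Rdiv_lt1; lra.
  lra.
rewrite /ln_plus; case: Rle_dec => Yq /=.
  have qY : INR q <= Y.
    apply: (Rmult_le_reg_r (/ INR q)); first by apply: Rinv_0_lt_compat; lra.
    by rewrite Rinv_r; lra.
  rewrite -[ln _]Rplus_0_l; apply: (is_RInt_Chasles _ 1 (INR q) Y).
    by apply: (is_RInt_ext (fun _ => 0)) => [x /vanish -> //|]; apply: is_RInt_zero.
  apply: (is_RInt_ext Rinv).
    move=> x; rewrite Rmin_left ?Rmax_right // => xq; rewrite /ind_ge1 /=.
    destruct (Rle_dec 1 (x / INR q)) as [r|h] => /=; first by rewrite /Rdiv Rmult_1_l.
    by case: h; apply: Rdiv_ge1; lra.
  have -> : ln (Y / INR q) = minus (ln Y) (ln (INR q)).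
    by rewrite ln_div; [| lra | lra].
  apply: (is_RInt_derive ln) => x; rewrite Rmin_left ?Rmax_right // => xq.
    by apply: is_derive_ln; lra.
  by apply: continuous_Rinv; lra.
apply: (is_RInt_ext (fun _ => 0)) => [x|]; last by apply: is_RInt_zero.
rewrite Rmin_left ?Rmax_right // => x_in; rewrite vanish // Rmin_left ?Rmax_right //.
have : Y < INR q by apply: Rnot_le_lt => qY; apply: Yq; apply: Rdiv_ge1; lra.
lra.
Qed.

Lemma ln1p_le x : 0 < x -> ln (1 + x) <= x.
Proof.
move=> x0; rewrite -{2}(ln_exp x); left; apply: ln_increasing; first lra.
by apply: exp_ineq1; lra.
Qed.

Lemma ln_min_le_harmonic N u : 1 <= u ->
  ln (Rmin u (INR N + 1)) <= \big[Rplus/0]_(n <- iota 1 N) (/ INR n * ind_ge1 (u / INR n)).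
Proof.
move=> u1; elim: N => [|N IH].
  by rewrite big_nil /= Rplus_0_l Rmin_right // ln_1; lra.
have -> : iota 1 N.+1 = iota 1 N ++ [:: N.+1] by rewrite -[N.+1]addn1 iotaD addnC.
rewrite big_cat big_seq1 /= -/(INR N.+1) S_INR.
have N1 : 0 < INR N + 1 by have := pos_INR N; lra.
case: (Rle_dec (INR N + 1) u) => Nu.
- rewrite ind_ge1_1; last exact: Rdiv_ge1.
  rewrite Rmin_right in IH; last lra.
  have ln_step : ln (INR N + 1 + 1) <= ln (INR N + 1) + / (INR N + 1).
    have r0 : 0 < / (INR N + 1) by apply: Rinv_0_lt_compat.
    have -> : INR N + 1 + 1 = (INR N + 1) * (1 + / (INR N + 1)) by field; lra.
    by rewrite ln_mult; [have := ln1p_le r0 | | ]; lra.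
  have := Rmin_r u (INR N + 1 + 1); have : 0 < Rmin u (INR N + 1 + 1) by apply: Rmin_pos; lra.
  by move=> m0 mle; have := ln_le _ _ m0 mle; lra.
- have uN := Rnot_le_lt _ _ Nu.
  rewrite ind_ge1_0 ?Rmult_0_r ?Rplus_0_r; last exact: Rdiv_lt1.
  by rewrite Rmin_left in IH; [rewrite Rmin_left |]; lra.
Qed.

Lemma ln_plus_le_harmonic_sum N u : u <= INR N -> ln_plus u <= harmonic_sum N N.+1 u.
Proof.
move=> uN; rewrite /ln_plus; case: Rle_dec => u1 /=; last first.
  by case: (admissible_harmonic_sum N N.+1).
have := ln_min_le_harmonic N u1; rewrite Rmin_left; last lra.
by rewrite /harmonic_sum smooth_sum_full.
Qed.

Lemma RInt_Fk k N Y : 1 <= Y -> Y <= INR N ->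
  RInt (fun t => Fk k t / t) 1 Y
  = \big[Rplus/0]_(q <- iota 1 N) (Fweight k q * ln_plus (Y / INR q)).
Proof.
move=> Y1 YN; apply: is_RInt_unique.
apply: (is_RInt_ext (fun t => \big[Rplus/0]_(q <- iota 1 N)
          (Fweight k q * (ind_ge1 (t / INR q) / t)))).
  move=> x; rewrite Rmin_left ?Rmax_right // => x_in.
  rewrite (Fk_F_sum k (N := N)) /F_sum ?smooth_sum_full /Rdiv ?big_distrl; try lra.
  by apply: eq_bigr => q _ /=; ring.
apply: is_RInt_sum => q /mem_iota1 q0.
exact: is_RInt_scal (is_RInt_ind_ge1_div q0 Y1).
Qed.

Lemma RInt_Fk_le_logF_sum k N Y : 1 <= Y -> Y <= INR N ->
  RInt (fun t => Fk k t / t) 1 Y <= logF_sum N k N.+1 Y.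
Proof.
move=> Y1 YN; rewrite (RInt_Fk k Y1 YN) /logF_sum smooth_sum_full.
apply: ler_Rsum => q /mem_iota1 /INR_ge1 q1 _.
apply: Rmult_le_compat_l; first exact: Fweight_ge0.
by apply: ln_plus_le_harmonic_sum; apply: Rdiv_le_bound YN; [| apply: pos_INR].
Qed.

(** * Counting ordered factorizations of a squarefree integer *)

Lemma squarefree_dvd_logn l d p : squarefree l -> (d %| l)%N -> logn p d = (p \in primes d).
Proof.
move=> sql dl; have l0 := squarefree_gt0 sql.
have l1 : (logn p l <= 1)%N.
  case pl: (p \in primes l); first by rewrite (squarefree_logn sql pl).
  by move: pl; rewrite -logn_gt0 => /negbT; rewrite -leqNgt => /leq_trans; apply.
by rewrite -logn_gt0; have := dvdn_leq_log p l0 dl; case: (logn p d) => [|[|n]] //=; lia.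
Qed.

Lemma squarefree_dvd_eq l d e : squarefree l -> (d %| l)%N -> (e %| l)%N ->
  (forall p, prime p -> (p %| d) = (p %| e))%N -> d = e.
Proof.
move=> sql dl el de; have l0 := squarefree_gt0 sql.
have d0 := dvdn_gt0 l0 dl; have e0 := dvdn_gt0 l0 el.
apply: eqn_from_log => // p.
rewrite (squarefree_dvd_logn p sql dl) (squarefree_dvd_logn p sql el).
by rewrite !mem_primes d0 e0; case: (boolP (prime p)) => //= pp; rewrite de.
Qed.

Section Factorizations.
Variables (k l : nat).
Hypothesis sql : squarefree l.
Implicit Type t : k.+1.-tuple 'I_l.+1.

Definition is_factorization t : bool := (\prod_(i <- t) (i : nat))%N == l.

Lemma factorization_dvd t j : is_factorization t -> (tnth t j %| l)%N.
Proof.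
move=> /eqP tl; rewrite -[X in (_ %| X)%N]tl.
by rewrite big_tuple (bigD1 j) //= dvdn_mulr.
Qed.

Lemma factorization_prime_unique t p j1 j2 : is_factorization t -> prime p ->
  (p %| tnth t j1)%N -> (p %| tnth t j2)%N -> j1 = j2.
Proof.
move=> /eqP tl pp pj1 pj2; apply/eqP/negPn/negP => j12.
have : (p ^ 2 %| l)%N.
  rewrite -tl big_tuple (bigD1 j1) // (bigD1 j2) 1?eq_sym //= mulnA expnS expn1.
  by apply: dvdn_mulr; apply: dvdn_mul.
move/(dvdn_leq_log p (squarefree_gt0 sql)); rewrite pfactorK // (squarefree_logn sql) //.
rewrite mem_primes pp squarefree_gt0 //=.
by apply: dvdn_trans pj1 _; apply: factorization_dvd; apply/eqP.
Qed.

Lemma factorization_has t p : is_factorization t -> prime p -> (p %| l)%N ->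
  has (fun d : 'I_l.+1 => p %| d)%N t.
Proof. by move=> /eqP tl pp; rewrite -{1}tl Euclid_dvd_prod // big_has. Qed.

Lemma factorization_find t p j : is_factorization t -> prime p -> (p %| tnth t j)%N ->
  find (fun d : 'I_l.+1 => p %| d)%N t = j.
Proof.
move=> tf pp pj; have ht : has (fun d : 'I_l.+1 => p %| d)%N t.
  by apply/hasP; exists (tnth t j); rewrite ?mem_tnth.
have ft : (find (fun d : 'I_l.+1 => p %| d)%N t < k.+1)%N.
  by move: ht; rewrite has_find size_tuple.
have := nth_find ord0 ht; rewrite -(tnth_nth ord0 t (Ordinal ft)) => pf.
by rewrite -[LHS]/(val (Ordinal ft)) (factorization_prime_unique tf pp pf pj).
Qed.

(* The index of the factor carrying each prime divisor of [l]. *)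
Definition prime_position t : {ffun 'I_(size (primes l)) -> 'I_k.+1} :=
  [ffun i : 'I_(size (primes l)) =>
     inord (find (fun d : 'I_l.+1 => nth 0%N (primes l) i %| d)%N t)].

Lemma prime_position_inj : {in is_factorization &, injective prime_position}.
Proof.
move=> t s tf sf ts; apply: eq_from_tnth => j; apply: val_inj.
have l0 := squarefree_gt0 sql.
suff dvd_ts u v : is_factorization u -> is_factorization v ->
    prime_position u = prime_position v ->
    forall p, prime p -> (p %| tnth u j)%N -> (p %| tnth v j)%N.
  apply: (squarefree_dvd_eq sql); try exact: factorization_dvd.
  by move=> p pp; apply/idP/idP; apply: dvd_ts.
move=> uf vf uv p pp pu.
have pl : (p %| l)%N by apply: dvdn_trans pu (factorization_dvd _ uf).
have pin : p \in primes l by rewrite mem_primes pp l0.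
have im : (index p (primes l) < size (primes l))%N by rewrite index_mem.
have := congr1 (fun g : {ffun _ -> 'I_k.+1} => val (g (Ordinal im))) uv.
rewrite !ffunE /= nth_index //.
have hv := factorization_has vf pp pl.
have fv : (find (fun d : 'I_l.+1 => p %| d)%N v < k.+1)%N.
  by move: hv; rewrite has_find size_tuple.
rewrite (factorization_find uf pp pu) !inordK // => jv.
by have := nth_find ord0 hv; rewrite -jv -tnth_nth.
Qed.

Lemma tau_le : (tau k.+1 l <= k.+1 ^ size (primes l))%N.
Proof.
rewrite /tau -(card_in_imset (f := prime_position)); last first.
  by move=> t s; rewrite !inE; apply: prime_position_inj.
by apply: leq_trans (max_card _) _; rewrite card_ffun !card_ord.
Qed.

End Factorizations.

Lemma Rprod_div T (s : seq T) (a b c : T -> R) :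
  \big[Rmult/1]_(i <- s) (a i / (b i * c i)) =
  \big[Rmult/1]_(i <- s) a i / (\big[Rmult/1]_(i <- s) b i * \big[Rmult/1]_(i <- s) c i).
Proof.
elim: s => [|x s IH]; first by rewrite !big_nil /=; field.
by rewrite !big_cons IH /= /Rdiv !Rinv_mult; ring.
Qed.

Lemma Aweight_squarefree k l : coprime l (Pprod k.+1) -> squarefree l ->
  Aweight k l = INR k ^ size (primes l) / (INR (psi k.+1 l) * INR l).
Proof.
move=> co sq; rewrite /Aweight /sqf_weight co sq Rprod_div Rprod_const /=.
congr (_ / (_ * _)); last by rewrite {2}(squarefree_prod_primes sq) INR_prod.
rewrite /psi INR_prod big_seq [RHS]big_seq_cond; apply: eq_big => p.
  by case pl: (p \in primes l); rewrite //= (coprime_Pprod_primes co pl).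
move=> pl; rewrite minus_INR //; apply/leP.
exact: ltnW (coprime_Pprod_primes co pl).
Qed.

Lemma rhs_coef_le k l : (0 < k)%N -> coprime l (Pprod k.+1) ->
  0 <= mu2 l * INR (tau k l) / (INR (psi k.+1 l) * INR l) <= Aweight k l.
Proof.
case: k => // k _ co; rewrite /mu2; case sq: (squarefree l); last first.
  by rewrite Rmult_0_l /Rdiv Rmult_0_l; split; [lra | apply: Aweight_ge0].
have := Aweight_ge0 k.+1 l; rewrite Aweight_squarefree // Rmult_1_l /Rdiv => A0.
have tau_le_R : INR (tau k.+1 l) <= INR k.+1 ^ size (primes l).
  by rewrite -INR_expn; apply: le_INR; apply/leP; apply: tau_le.
have := pos_INR (tau k.+1 l); have := inv_INR_ge0 (psi k.+2 l * l); rewrite mult_INR.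
by move=> *; split; nra.
Qed.

Lemma sieve_constE k N : (k.+1 <= N)%N ->
  sieve_const k N.+1 = INR (Pprod k) / INR (Pprod k.+1)
    * Rprod_seq [seq p <- iota 0 k.+2 | prime p] (fun p => 1 - / INR p).
Proof.
move=> kN; rewrite /sieve_const /small_prime_factor big_split Rmult_comm.
congr (_ * _).
  rewrite Rprod_seqE big_filter -(subn0 k.+2) -/(index_iota 0 k.+2).
  by rewrite (big_nat_widen _ _ _ _ _ (kN : (k.+2 <= N.+1)%N)).
have k1N : k.+1 \in index_iota 0 N.+1 by rewrite mem_index_iota.
rewrite big_mkcond (bigD1_seq _ k1N (iota_uniq _ _)) eqxx leqnn andbT big1 => [|p].
  rewrite Monoid.mulm1 PprodS mult_INR.
  have P0 := lt_0_INR _ (ltP (Pprod_gt0 k)); have k0 := lt_0_INR _ (ltP (ltn0Sn k)).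
  by case: (prime k.+1); rewrite ?INR_1; field; lra.
by rewrite eq_sym => /negbTE ->; case: (_ && _).
Qed.

Lemma rhs_le_rhs_sum k N z : (0 < k)%N -> 1 <= z -> z <= INR N ->
  Rsum_seq [seq l <- nats_upto z | coprime l (Pprod k.+1)]
    (fun l => mu2 l * INR (tau k l) / (INR (psi k.+1 l) * INR l)
              * RInt (fun t => Fk k t / t) 1 (z / INR l))
  <= rhs_sum N k N.+1 z.
Proof.
move=> k0 z1 zN; rewrite (Rsum_nats_upto _ _ _ zN); last lra.
rewrite /rhs_sum smooth_sum_full big_mkcond; apply: ler_Rsum => l /mem_iota1 l0 _.
have [L0 _ _] := admissible_logF_sum N k N.+1.
case: ifP => co; last by apply: Rmult_le_pos; [apply: Aweight_ge0 | apply: L0].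
have l1 := INR_ge1 l0.
case: (Rlt_le_dec (z / INR l) 1) => zl.
  rewrite ind_ge1_0 // Rmult_0_r; apply: Rmult_le_pos; [apply: Aweight_ge0 | apply: L0].
rewrite ind_ge1_1 // Rmult_1_r.
have [c0 cA] := rhs_coef_le k0 co.
have := RInt_Fk_le_logF_sum k zl (Rdiv_le_bound l1 (pos_INR N) zN).
have := L0 (z / INR l); nra.
Qed.

Theorem mainTheorem8 (kappa : nat) (z : R) :
  (1 <= kappa)%N -> (1 <= z)%R ->
  (Fk kappa.+1 z >=
     INR (Pprod kappa) / INR (Pprod kappa.+1)
     * Rprod_seq [seq p <- iota 0 kappa.+2 | prime p] (fun p => 1 - / INR p)
     * Rsum_seq [seq l <- nats_upto z | coprime l (Pprod kappa.+1)]
         (fun l => mu2 l * INR (tau kappa l) / (INR (psi kappa.+1 l) * INR l)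
                   * RInt (fun t => Fk kappa t / t) 1 (z / INR l)))%R.
Proof.
move=> k1 z1; set N := maxn (Z.to_nat (up z)) kappa.+1.
have zN : z <= INR N.
  apply: Rle_trans (INR_up_ge _) _; first lra.
  by apply: le_INR; apply/leP; apply: leq_maxl.
have N0 : (0 < N)%N by rewrite leq_max orbT.
apply: Rle_ge; rewrite -(sieve_constE (N := N)) ?leq_maxr // (Fk_F_sum _ _ zN); last lra.
apply: Rle_trans (sieve_const_rhs_sum_le _ _ N0 zN).
apply: Rmult_le_compat_l; first exact: sieve_const_ge0.
exact: rhs_le_rhs_sum.
Qed.
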